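(* Let $A,B$ be non-empty sets, $I$ a non-empty index set, $\{V_i\}_{i\in I}\subseteq\mathcal R(A)$, $\{W_i\}_{i\in I}\subseteq\mathcal R(B)$, $Z\in\mathcal R(A,B)$, and let $\phi^{(1)},\dots,\phi^{(6)}:\mathcal R(A,B)\to\mathcal R(A,B)$ be defined by $\phi^{(1)}(R)=\bigwedge_{i\in I}[(W_i\circ R^{-1})\backslash V_i]^{-1}$, $\phi^{(2)}(R)=\bigwedge_{i\in I}(R\circ W_i)/V_i$, $\phi^{(3)}(R)=\bigwedge_{i\in I}[(W_i\circ R^{-1})\backslash V_i]^{-1}\wedge[(V_i\circ R)\backslash W_i]$, $\phi^{(4)}(R)=\bigwedge_{i\in I}[(R\circ W_i)/V_i]\wedge[(R^{-1}\circ V_i)/W_i]^{-1}$, $\phi^{(5)}(R)=\bigwedge_{i\in I}[(R\circ W_i)/V_i]\wedge[(V_i\circ R)\backslash W_i]$, $\phi^{(6)}(R)=\bigwedge_{i\in I}[(W_i\circ R^{-1})\backslash V_i]^{-1}\wedge[(R^{-1}\circ V_i)/W_i]^{-1}$. Then for every $t\in\{1,\dots,6\}$, a fuzzy relation $U\in\mathcal R(A,B)$ is a solution to $WL^{2\text{-}t}(A,B,I,V_i,W_i,Z)$ if and only if $U\le\phi^{(t)}(U)$ and $U\le Z$.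
   Context: $\mathcal L=(L,\wedge,\vee,\otimes,\to,0,1)$ is a complete residuated lattice. For non-empty sets $X,Y$, $\mathcal R(X,Y)$ is the set of fuzzy relations $X\times Y\to L$, $\mathcal R(X)=\mathcal R(X,X)$, ordered pointwise with pointwise meets; $R^{-1}(y,x)=R(x,y)$; $(R\circ S)(x,t)=\bigvee_{y}R(x,y)\otimes S(y,t)$. Residuals: for $S\in\mathcal R(X,Y)$, $T\in\mathcal R(X)$, $T'\in\mathcal R(Y)$, the right residual $S/T\in\mathcal R(X,Y)$ is $(S/T)(x,y)=\bigwedge_{x'\in X}(T(x',x)\to S(x',y))$ and the left residual $S\backslash T'\in\mathcal R(X,Y)$ is $(S\backslash T')(x,y)=\bigwedge_{y'\in Y}(T'(y,y')\to S(x,y'))$. Heterogeneous systems with unknown $U\in\mathcal R(A,B)$: $WL^{2\text{-}1}$: $U^{-1}\circ V_i\le W_i\circ U^{-1}$ ($i\in I$), $U\le Z$; $WL^{2\text{-}2}$: $V_i\circ U\le U\circ W_i$ ($i\in I$), $U\le Z$; $WL^{2\text{-}3}$: $U^{-1}\circ V_i\le W_i\circ U^{-1}$ and $U\circ W_i\le V_i\circ U$ ($i\in I$), $U\le Z$; $WL^{2\text{-}4}$: $V_i\circ U\le U\circ W_i$ and $W_i\circ U^{-1}\le U^{-1}\circ V_i$ ($i\in I$), $U\le Z$; $WL^{2\text{-}5}$: $V_i\circ U=U\circ W_i$ ($i\in I$), $U\le Z$; $WL^{2\text{-}6}$: $U^{-1}\circ V_i=W_i\circ U^{-1}$ ($i\in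 I$), $U\le Z$. *)

Set Implicit Arguments.

Record CRL := {
  carrier :> Type;
  le : carrier -> carrier -> Prop;
  meet : carrier -> carrier -> carrier;
  join : carrier -> carrier -> carrier;
  tensor : carrier -> carrier -> carrier;
  res : carrier -> carrier -> carrier;
  bot : carrier;
  top : carrier;
  inf : (carrier -> Prop) -> carrier;
  sup : (carrier -> Prop) -> carrier;
  le_refl : forall x, le x x;
  le_trans : forall x y z, le x y -> le y z -> le x z;
  le_antisym : forall x y, le x y -> le y x -> x = y;
  meet_glb : forall x y z, le z (meet x y) <-> (le z x /\ le z y);
  join_lub : forall x y z, le (join x y) z <-> (le x z /\ le y z);
  inf_glb : forall (S : carrier -> Prop) z,
      le z (inf S) <-> (forall s, S s -> le z s);
  sup_lub : forall (S : carrier -> Prop) z,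
      le (sup S) z <-> (forall s, S s -> le s z);
  bot_least : forall x, le bot x;
  top_greatest : forall x, le x top;
  tensor_comm : forall x y, tensor x y = tensor y x;
  tensor_assoc : forall x y z, tensor x (tensor y z) = tensor (tensor x y) z;
  tensor_unit : forall x, tensor x top = x;
  adjoint : forall x y z, le (tensor x y) z <-> le x (res y z)
}.

Section FuzzyRel.
Variable L : CRL.

Definition frel (X Y : Type) := X -> Y -> carrier L.

Definition rle {X Y : Type} (R S : frel X Y) : Prop :=
  forall x y, le L (R x y) (S x y).

Definition req {X Y : Type} (R S : frel X Y) : Prop :=
  forall x y, R x y = S x y.

Definition rinv {X Y : Type} (R : frel X Y) : frel Y X := fun y x => R x y.

Definition rcomp {X Y T : Type} (R : frel X Y) (S : frel Y T) : frel X T :=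
  fun x t => sup L (fun z => exists y, z = tensor L (R x y) (S y t)).

Definition rmeet {X Y : Type} (R S : frel X Y) : frel X Y :=
  fun x y => meet L (R x y) (S x y).

Definition rbigmeet {I X Y : Type} (F : I -> frel X Y) : frel X Y :=
  fun x y => inf L (fun z => exists i, z = F i x y).

(* right residual S/T, S in R(X,Y), T in R(X) *)
Definition rres {X Y : Type} (S : frel X Y) (T : frel X X) : frel X Y :=
  fun x y => inf L (fun z => exists x', z = res L (T x' x) (S x' y)).

(* left residual S\T', S in R(X,Y), T' in R(Y) *)
Definition lres {X Y : Type} (S : frel X Y) (T' : frel Y Y) : frel X Y :=
  fun x y => inf L (fun z => exists y', z = res L (T' y y') (S x y')).

Section Systems.
Variables (A B I : Type) (V : I -> frel A A) (W : I -> frel B B) (Z : frel A B).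

Definition WL1 (U : frel A B) : Prop :=
  (forall i, rle (rcomp (rinv U) (V i)) (rcomp (W i) (rinv U))) /\ rle U Z.
Definition WL2 (U : frel A B) : Prop :=
  (forall i, rle (rcomp (V i) U) (rcomp U (W i))) /\ rle U Z.
Definition WL3 (U : frel A B) : Prop :=
  (forall i, rle (rcomp (rinv U) (V i)) (rcomp (W i) (rinv U)) /\
             rle (rcomp U (W i)) (rcomp (V i) U)) /\ rle U Z.
Definition WL4 (U : frel A B) : Prop :=
  (forall i, rle (rcomp (V i) U) (rcomp U (W i)) /\
             rle (rcomp (W i) (rinv U)) (rcomp (rinv U) (V i))) /\ rle U Z.
Definition WL5 (U : frel A B) : Prop :=
  (forall i, req (rcomp (V i) U) (rcomp U (W i))) /\ rle U Z.
Definition WL6 (U : frel A B) : Prop :=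
  (forall i, req (rcomp (rinv U) (V i)) (rcomp (W i) (rinv U))) /\ rle U Z.

Definition phi1 (R : frel A B) : frel A B :=
  rbigmeet (fun i => rinv (lres (rcomp (W i) (rinv R)) (V i))).
Definition phi2 (R : frel A B) : frel A B :=
  rbigmeet (fun i => rres (rcomp R (W i)) (V i)).
Definition phi3 (R : frel A B) : frel A B :=
  rbigmeet (fun i => rmeet (rinv (lres (rcomp (W i) (rinv R)) (V i)))
                           (lres (rcomp (V i) R) (W i))).
Definition phi4 (R : frel A B) : frel A B :=
  rbigmeet (fun i => rmeet (rres (rcomp R (W i)) (V i))
                           (rinv (rres (rcomp (rinv R) (V i)) (W i)))).
Definition phi5 (R : frel A B) : frel A B :=
  rbigmeet (fun i => rmeet (rres (rcomp R (W i)) (V i))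
                           (lres (rcomp (V i) R) (W i))).
Definition phi6 (R : frel A B) : frel A B :=
  rbigmeet (fun i => rmeet (rinv (lres (rcomp (W i) (rinv R)) (V i)))
                           (rinv (rres (rcomp (rinv R) (V i)) (W i)))).
End Systems.
End FuzzyRel.

(* Composition is residuated: T o U <= P
   iff U <= P/T, and U o T <= P iff U <= P\T, while inversion is an order
   isomorphism.  Hence each inequality is equivalent to U lying below one
   residual, equalities split into two inequalities, and the conjunction over i
   is U lying below the meet of the residuals, which is phi^(t)(U). *)
From Stdlib Require Import Setoid ssreflect.

Section ResiduatedRelations.
Variable L : CRL.

Lemma sup_ub (S : carrier L -> Prop) s : S s -> le L s (sup L S).
Proof. exact: proj1 (sup_lub L S (sup L S)) (le_refl L _) s. Qed.

Lemma inf_lb (S : carrier L -> Prop) s : S s -> le L (inf L S) s.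
Proof. exact: proj1 (inf_glb L S (inf L S)) (le_refl L _) s. Qed.

Lemma rle_rres {X Y : Type} (T : frel L X X) (U P : frel L X Y) :
  rle (rcomp T U) P <-> rle U (rres P T).
Proof.
  split=> H x y.
  - apply/inf_glb=> _ [x' ->]; apply/adjoint; rewrite tensor_comm.
    apply: le_trans (H x' y); apply: sup_ub; by exists x.
  - apply/sup_lub=> _ [z ->]; rewrite tensor_comm; apply/adjoint.
    apply: le_trans (H z y) _; apply: inf_lb; by exists x.
Qed.

Lemma rle_lres {X Y : Type} (T : frel L Y Y) (U P : frel L X Y) :
  rle (rcomp U T) P <-> rle U (lres P T).
Proof.
  split=> H x y.
  - apply/inf_glb=> _ [y' ->]; apply/adjoint.
    apply: le_trans (H x y'); apply: sup_ub; by exists y.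
  - apply/sup_lub=> _ [z ->]; apply/adjoint.
    apply: le_trans (H x z) _; apply: inf_lb; by exists y.
Qed.

Lemma rle_rinv {X Y : Type} (U : frel L X Y) (R : frel L Y X) :
  rle U (rinv R) <-> rle (rinv U) R.
Proof. by split=> H a b; apply: H. Qed.

Lemma rle_rinv_lres {X Y : Type} (T : frel L X X) (U : frel L X Y) (P : frel L Y X) :
  rle (rcomp (rinv U) T) P <-> rle U (rinv (lres P T)).
Proof. by rewrite rle_rinv rle_lres. Qed.

Lemma rle_rinv_rres {X Y : Type} (T : frel L Y Y) (U : frel L X Y) (P : frel L Y X) :
  rle (rcomp T (rinv U)) P <-> rle U (rinv (rres P T)).
Proof. by rewrite rle_rinv rle_rres. Qed.

Lemma rle_rmeet {X Y : Type} (U R S : frel L X Y) :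
  rle U (rmeet R S) <-> rle U R /\ rle U S.
Proof.
  split=> [H | [HR HS] x y]; last by apply/meet_glb.
  by split=> x y; have /meet_glb[] := H x y.
Qed.

Lemma rle_rbigmeet {I X Y : Type} (U : frel L X Y) (F : I -> frel L X Y) :
  rle U (rbigmeet F) <-> forall i, rle U (F i).
Proof.
  split=> [H i x y | H x y].
  - apply: le_trans (H x y) _; apply: inf_lb; by exists i.
  - by apply/inf_glb=> _ [i ->]; apply: H.
Qed.

Lemma req_rle {X Y : Type} (R S : frel L X Y) :
  req R S <-> rle R S /\ rle S R.
Proof.
  split=> [H | [HRS HSR] x y]; last exact: le_antisym.
  by split=> x y; rewrite H; apply: le_refl.
Qed.

Lemma rle_system_rbigmeet {I X Y : Type} (P : I -> Prop) (F : I -> frel L X Y)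
    (U Z : frel L X Y) :
  (forall i, P i <-> rle U (F i)) ->
  ((forall i, P i) /\ rle U Z <-> rle U (rbigmeet F) /\ rle U Z).
Proof.
  move=> HP; rewrite rle_rbigmeet.
  by split=> -[H HZ]; split=> // i; apply/HP.
Qed.

End ResiduatedRelations.

Theorem theorem4p5 (L : CRL) (A B I : Type)
  (hA : inhabited A) (hB : inhabited B) (hI : inhabited I)
  (V : I -> frel L A A) (W : I -> frel L B B) (Z : frel L A B) :
  forall U : frel L A B,
    (WL1 V W Z U <-> rle U (phi1 V W U) /\ rle U Z) /\
    (WL2 V W Z U <-> rle U (phi2 V W U) /\ rle U Z) /\
    (WL3 V W Z U <-> rle U (phi3 V W U) /\ rle U Z) /\
    (WL4 V W Z U <-> rle U (phi4 V W U) /\ rle U Z) /\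
    (WL5 V W Z U <-> rle U (phi5 V W U) /\ rle U Z) /\
    (WL6 V W Z U <-> rle U (phi6 V W U) /\ rle U Z).
Proof.
  move=> U; split; [|split; [|split; [|split; [|split]]]];
    apply: rle_system_rbigmeet => i; rewrite ?rle_rmeet ?req_rle.
  - exact: rle_rinv_lres.
  - exact: rle_rres.
  - by rewrite rle_rinv_lres rle_lres.
  - by rewrite rle_rres rle_rinv_rres.
  - by rewrite rle_rres rle_lres.
  - by rewrite rle_rinv_lres rle_rinv_rres.
Qed.
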